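(* Let $\lambda$ be a CW-labeling of a finite graded poset $P$ with $\hat0$. Then the posets $R_\lambda(P)$ and $Q_\lambda(P)$ are isomorphic.
   Context: C-labelings: a maximal chain is an unrefinable chain from $\hat0$ to a maximal element. A C-labeling assigns to each pair $(\mathbf m,e)$, $\mathbf m$ a maximal chain and $e$ a cover relation of $\mathbf m$, a label in a poset $\Lambda$, such that maximal chains coinciding along their bottom $d$ cover relations have equal labels there (so $\lambda(\mathbf c,x\lessdot y)$ is defined for saturated chains $\mathbf c$ from $\hat0$ containing $x\lessdot y$, or ending at $x$ and extended by $y$). A rooted interval $[x,y]_{\mathbf r}$ is an interval with a saturated chain $\mathbf r$ from $\hat0$ to $x$, a maximal chain $\mathbf c$ of $[x,y]$ being labeled as in $\mathbf r\cup\mathbf c$. Increasing = strictly increasing label word; ascent-free = no consecutive labels $a<b$. CR-labeling: each rooted interval has exactly one increasing maximal chain. Rank two switching property: for every maximal chain $\mathbf m:\hat0=m_0\lessdot\cdots\lessdot m_k$ and $i<k$ with an ascent at rank $i$ there is a unique $m_i'\ne m_i$ such that replacing $m_i$ by $m_i'$ gives a maximal chain with the same labels except that those at ranks $i,i+1$ are swapped, and $m_i'$ is the same for all maximal chains agreeing with $\mathbf m$ in $m_0,\dots,m_{i+1}$ (quadratic exchange $U_i$; identity when there is no ascent; also defined on saturated chains from $\hat0$). CW-labeling: CR-labeling with the rank two switching property such that in each rooted interval distinct ascent-free maximal chains have distinct label words. $Q_\lambda(P)$: $C(P)$ is the set of saturated chains from $\hat0$ ordered by inclusion; $\mathbf c_1\sim_\lambda\mathbf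 c_2$ iff they have the same top element $y$ and are connected by quadratic exchanges (forwards or backwards) among maximal chains of $[\hat0,y]$. $Q_\lambda(P)$ is the set of classes ordered by the transitive closure of: $X\le Y$ if some $\mathbf c\in X$, $\mathbf d\in Y$ have $\mathbf c\subseteq\mathbf d$. $\mathrm{sort}$: for a word $w$ over $\Lambda$, repeatedly replace an adjacent factor $w_iw_{i+1}$ with $w_i<w_{i+1}$ by $w_{i+1}w_i$; this yields a unique ascent-free word $\mathrm{sort}(w)$. $R_\lambda(P)$ is the poset whose elements are pairs $(x,w)$ with $x\in P$ and $w$ the word of labels of an ascent-free saturated chain $\mathbf c$ from $\hat0$ to $x$ (such $\mathbf c$ is determined by $w$), with cover relations $(x,w)\lessdot(y,u)$ whenever $x\lessdot y$ and $u=\mathrm{sort}(w\,\lambda(\mathbf c,x\lessdot y))$, where $\mathbf c$ is the chain determined by $w$ and juxtaposition denotes concatenation; the order is the reflexive-transitive closure of these covers. *)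

From mathcomp Require Import all_boot all_order.
From Stdlib Require Import Relations.Relation_Operators.
Set Implicit Arguments. Unset Strict Implicit. Unset Printing Implicit Defensive.
Import Order.Theory.
Local Open Scope order_scope.

(* A saturated chain from 0^,  0^ = c_0 <. c_1 <. ... <. c_k, is encoded by
   the seq [:: c_1; ...; c_k] (the bottom element is left implicit), so that
   c_j = nth \bot c (j.-1) for 1 <= j <= k, and its top is last \bot c.
   The cover c_j <. c_{j+1} of a maximal chain m receives label  lam m j
   (0 <= j < size m).  Values of lam outside maximal chains / indices are junk
   and are never used. *)

Section Poset.
Context {d : Order.disp_t} {T : finBPOrderType d}.

Definition covb (x y : T) : bool :=
  (x < y) && [forall z, ~~ ((x < z) && (z < y))].

Definition satch (c : seq T) : bool := path covb \bot c.
Definition topc (c : seq T) : T := last \bot c.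

Definition maxch (c : seq T) : bool := satch c && [forall y, ~~ (topc c < y)].

Definition intchain (x y : T) (dc : seq T) : bool :=
  path covb x dc && (last x dc == y).

(* greedy extension of a chain by covers until a maximal element is reached
   (#|T| steps always suffice): used to read off the labels of a saturated
   chain from 0^ via some maximal chain extending it. *)
Fixpoint extend_fuel (n : nat) (c : seq T) : seq T :=
  match n with
  | 0 => c
  | n'.+1 => match [pick y | covb (topc c) y] with
             | Some y => extend_fuel n' (rcons c y)
             | None => c
             end
  end.
Definition extend (c : seq T) : seq T := extend_fuel #|T| c.

End Poset.

Definition graded {d : Order.disp_t} (T : finBPOrderType d) : Prop :=
  exists n, forall c : seq T, maxch c -> size c = n.

Section Labeling.
Context {d : Order.disp_t} {T : finBPOrderType d}.
Context {dL : Order.disp_t} {L : porderType dL}.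
Variable lam : seq T -> nat -> L.

Definition C_labeling : Prop :=
  forall (m1 m2 : seq T) (k : nat), maxch m1 -> maxch m2 ->
    k <= size m1 -> k <= size m2 -> take k m1 = take k m2 ->
    forall i, i < k -> lam m1 i = lam m2 i.

(* label word of a saturated chain from 0^ (labels taken in any maximal
   chain extending it; well defined for a C-labeling) *)
Definition labs (c : seq T) : seq L := [seq lam (extend c) i | i <- iota 0 (size c)].

Definition increasing (w : seq L) : bool := sorted (fun a b => a < b) w.
Definition ascent_free (w : seq L) : bool := sorted (fun a b => ~~ (a < b)) w.

(* label word of a maximal chain dc of the rooted interval [x,y]_r, x = top r *)
Definition rword (r dc : seq T) : seq L := drop (size r) (labs (r ++ dc)).

Definition CR_labeling : Prop :=
  C_labeling /\
  forall (r : seq T) (y : T), satch r -> topc r <= y ->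
    exists! dc, intchain (topc r) y dc /\ increasing (rword r dc).

(* ascent at rank i (1 <= i < k): lam(m_{i-1} <. m_i) < lam(m_i <. m_{i+1}) *)
Definition ascent_at (m : seq T) (i : nat) : bool :=
  (0 < i < size m) && (lam m i.-1 < lam m i).

Definition switchP (m : seq T) (i : nat) (x : T) : Prop :=
  let m' := set_nth \bot m i.-1 x in
  maxch m' /\ lam m' i.-1 = lam m i /\ lam m' i = lam m i.-1 /\
  forall j, j < size m -> j != i.-1 -> j != i -> lam m' j = lam m j.

Definition rank2_switching : Prop :=
  forall (m : seq T) (i : nat), maxch m -> ascent_at m i ->
    (exists! x, x != nth \bot m i.-1 /\ switchP m i x) /\
    (forall (m2 : seq T) (x x2 : T), maxch m2 -> take i.+1 m2 = take i.+1 m ->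
       x != nth \bot m i.-1 -> switchP m i x ->
       x2 != nth \bot m2 i.-1 -> switchP m2 i x2 -> x = x2).

Definition CW_labeling : Prop :=
  CR_labeling /\ rank2_switching /\
  forall (r : seq T) (y : T) (d1 d2 : seq T), satch r ->
    intchain (topc r) y d1 -> intchain (topc r) y d2 ->
    ascent_free (rword r d1) -> ascent_free (rword r d2) ->
    d1 <> d2 -> rword r d1 <> rword r d2.

Definition qstep (c c' : seq T) : Prop :=
  exists (m : seq T) (i : nat) (x : T),
    maxch m /\ c = take (size c) m /\ ascent_at m i /\ i < size c /\
    x != nth \bot m i.-1 /\ switchP m i x /\ c' = set_nth \bot c i.-1 x.

Definition qstep_in (y : T) (a b : seq T) : Prop :=
  qstep a b /\ topc a = y /\ topc b = y.

Definition simQ (c1 c2 : seq T) : Prop :=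
  satch c1 /\ satch c2 /\ topc c1 = topc c2 /\
  clos_refl_sym_trans (seq T) (qstep_in (topc c1)) c1 c2.

(* [c] <= [d] in Q_lambda(P), expressed on representatives *)
Definition qbase (c e : seq T) : Prop :=
  exists c0 e0, simQ c c0 /\ simQ e e0 /\ satch c0 /\ satch e0 /\
                {subset c0 <= e0}.
Definition qle (c e : seq T) : Prop := clos_refl_trans (seq T) qbase c e.

Definition swapstep (w u : seq L) : Prop :=
  exists (a b : seq L) (x y : L), x < y /\ w = a ++ x :: y :: b /\ u = a ++ y :: x :: b.

Definition is_sort (w u : seq L) : Prop :=
  clos_refl_trans (seq L) swapstep w u /\ ascent_free u.

Definition isR (p : T * seq L) : Prop :=
  exists c, satch c /\ topc c = p.1 /\ ascent_free (labs c) /\ labs c = p.2.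

(* (x,w) <. (y,u): here drop (size c) (labs (rcons c y)) = [:: lam(c, x <. y)] *)
Definition rcov (p q : T * seq L) : Prop :=
  isR p /\ isR q /\ covb p.1 q.1 /\
  exists c, satch c /\ topc c = p.1 /\ ascent_free (labs c) /\ labs c = p.2 /\
            is_sort (p.2 ++ drop (size c) (labs (rcons c q.1))) q.2.

Definition rle (p q : T * seq L) : Prop := clos_refl_trans (T * seq L) rcov p q.

(* Q_lambda(P) ~= R_lambda(P): a map f from C(P) whose fibres are exactly the
   ~_lambda classes, onto R_lambda(P), preserving and reflecting the order;
   i.e. f induces an order isomorphism of the quotient Q_lambda(P) onto R_lambda(P). *)
Definition Q_R_isomorphic : Prop :=
  exists f : seq T -> T * seq L,
    (forall c, satch c -> isR (f c)) /\
    (forall p, isR p -> exists c, satch c /\ f c = p) /\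
    (forall c1 c2, satch c1 -> satch c2 -> (f c1 = f c2 <-> simQ c1 c2)) /\
    (forall c1 c2, satch c1 -> satch c2 -> (qle c1 c2 <-> rle (f c1) (f c2))).

End Labeling.

From mathcomp Require Import all_boot all_order.
From mathcomp Require Import zify.
From Stdlib Require Import Relations.Relation_Operators Relations.Operators_Properties.
Set Implicit Arguments. Unset Strict Implicit. Unset Printing Implicit Defensive.
Import Order.Theory.
Local Open Scope order_scope.

(* A quadratic exchange swaps an adjacent ascent ab -> ba (a < b) in the label word
   of a chain.  These swaps form a terminating (inversions drop) and locally confluent
   rewriting system on words, so every word w has a unique ascent-free normal form
   sort(w), which is therefore constant on each ~_lambda class.  Conversely, rank two
   switching realises every swap by an exchange, so each class contains an ascent-free
   chain, and by the CW condition exactly one.  Hence c |-> (top c, sort(labels of c))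
   is a bijection from Q_lambda(P) onto R_lambda(P).  Extending a chain by a cover
   gives a cover of R_lambda(P), and every cover of R_lambda(P) arises this way from
   the ascent-free representative, so the bijection is an order isomorphism. *)

Section SortingWords.
Context {dL : Order.disp_t} {L : porderType dL}.
Implicit Types (w u v : seq L) (x y z : L).
Local Notation swaps := (clos_refl_trans (seq L) (@swapstep _ L)).

Fixpoint inversions w : nat :=
  if w is x :: s then (count (fun y => (x < y)%O) s + inversions s)%N else 0%N.

Lemma swapstep_at (a b : seq L) x y :
  x < y -> swapstep (a ++ x :: y :: b) (a ++ y :: x :: b).
Proof. by move=> xy; exists a, b, x, y. Qed.

Lemma swapstep_cons z u v : swapstep u v -> swapstep (z :: u) (z :: v).
Proof. by case=> a [b [x [y [xy [-> ->]]]]]; exact: (swapstep_at (z :: a)). Qed.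

Lemma swaps_cons z u v : swaps u v -> swaps (z :: u) (z :: v).
Proof.
elim=> [{}u {}v uv | {}u | {}u v' {}v _ IH1 _ IH2].
- by apply: rt_step; apply: swapstep_cons.
- exact: rt_refl.
- exact: rt_trans IH1 IH2.
Qed.

Lemma swapstep_inversions w u : swapstep w u -> (inversions u < inversions w)%N.
Proof.
case=> a [b [x [y [xy [-> ->]]]]]; elim: a => [|z a IH] /=.
  by rewrite xy lt_gtF //=; lia.
by rewrite !count_cat /=; lia.
Qed.

Lemma ascent_free_swapstep w u : ascent_free w -> ~ swapstep w u.
Proof.
move=> afw [a [b [x [y [xy [ew _]]]]]]; move: afw; rewrite {}ew.
by elim: a => [|z a IH] /=; [rewrite /ascent_free /= xy | move/path_sorted].
Qed.

Fixpoint swap_ascent w : option (seq L) :=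
  if w is x :: s then
    if s is y :: t then
      if x < y then Some (y :: x :: t) else omap (cons x) (swap_ascent s)
    else None
  else None.

Lemma swap_ascentP w :
  if swap_ascent w is Some u then swapstep w u else ascent_free w.
Proof.
elim: w => [|x [|y t] IH] //.
have -> : swap_ascent [:: x, y & t] =
  if x < y then Some [:: y, x & t] else omap (cons x) (swap_ascent (y :: t)) by [].
case: ifP => xy; first exact: (swapstep_at [::]).
case: (swap_ascent (y :: t)) IH => [u|] /= IH; first exact: swapstep_cons.
by rewrite /ascent_free /= xy.
Qed.

Fixpoint sort_fuel (n : nat) w : seq L :=
  if n is n'.+1 then
    if swap_ascent w is Some u then sort_fuel n' u else w
  else w.

(* Every swap lowers [inversions], so [inversions w] rounds of fuel suffice. *)
Definition ascent_sort w : seq L := sort_fuel (inversions w).+1 w.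

Lemma is_sort_fuel n w : (inversions w < n)%N -> is_sort w (sort_fuel n w).
Proof.
elim: n w => [|n IH] w //= wn; have := swap_ascentP w.
case: (swap_ascent w) => [u wu | afw]; last by split; first exact: rt_refl.
have [wsu afsu] := IH u (leq_trans (swapstep_inversions wu) wn).
by split; first exact: rt_trans (rt_step _ _ _ _ wu) wsu.
Qed.

Lemma is_sort_ascent_sort w : is_sort w (ascent_sort w).
Proof. exact: is_sort_fuel. Qed.

(* Critical pairs: the two swaps coincide, overlap in x < y < y', or are disjoint. *)
Lemma swapstep_overlap x y b (a' : seq L) x' y' b' : x < y -> x' < y' ->
  x :: y :: b = a' ++ x' :: y' :: b' ->
  exists v, swaps (y :: x :: b) v /\ swaps (a' ++ y' :: x' :: b') v.
Proof.
move=> xy xy'; case: a' => [|z1 [|z2 a']] /=.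
- by case=> -> -> ->; exists (y' :: x' :: b'); split; apply: rt_refl.
- case=> e1 e2 e3; subst z1 x' b; have xy'' := lt_trans xy xy'.
  exists (y' :: y :: x :: b'); split.
  + apply: (@rt_trans _ _ _ (y :: y' :: x :: b')); apply: rt_step.
      exact: (swapstep_at [:: y]).
    exact: (swapstep_at [::]).
  + apply: (@rt_trans _ _ _ (y' :: x :: y :: b')); apply: rt_step.
      exact: (swapstep_at [::]).
    exact: (swapstep_at [:: y']).
- case=> e1 e2 e3; subst z1 z2 b; exists (y :: x :: a' ++ y' :: x' :: b').
  split; apply: rt_step; first exact: (swapstep_at [:: y, x & a']).
  exact: (swapstep_at [::]).
Qed.

Lemma swapstep_local_confluence w u v : swapstep w u -> swapstep w v ->
  exists t, swaps u t /\ swaps v t.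
Proof.
case=> a [b [x [y [xy [-> ->]]]]] [a' [b' [x' [y' [xy' [e ->]]]]]].
elim: a a' e => [|z a IH] [|z' a'] /= e.
- exact: (swapstep_overlap (a' := [::]) xy xy' e).
- exact: (swapstep_overlap (a' := _ :: _) xy xy' e).
- have [t [h1 h2]] := swapstep_overlap (a' := z :: a) xy' xy (esym e).
  by exists t.
- case: e => <- e; have [t [h1 h2]] := IH _ e.
  by exists (z :: t); split; apply: swaps_cons.
Qed.

(* Newman's lemma, by well-founded induction on the number of inversions. *)
Lemma is_sort_uniq w u v : is_sort w u -> is_sort w v -> u = v.
Proof.
elim: {w}(inversions w).+1 {-2}w (ltnSn (inversions w)) u v => // n IH w wn u v.
move=> [/clos_rt_rt1n_iff wu afu] [/clos_rt_rt1n_iff wv afv].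
case: wu afu => [|w1 u' s1 r1] afu.
  by case: wv afv => [|w2 v' s2 r2] //; case: (ascent_free_swapstep afu s2).
case: wv afv => [|w2 v' s2 r2] afv; first by case: (ascent_free_swapstep afv s1).
have [t [w1t w2t]] := swapstep_local_confluence s1 s2.
have [ts aft] := is_sort_ascent_sort t.
have eu : u' = ascent_sort t.
  apply: (IH w1 (leq_trans (swapstep_inversions s1) wn)).
    by split=> //; apply/clos_rt_rt1n_iff.
  by split=> //; apply: rt_trans w1t ts.
have ev : v' = ascent_sort t.
  apply: (IH w2 (leq_trans (swapstep_inversions s2) wn)).
    by split=> //; apply/clos_rt_rt1n_iff.
  by split=> //; apply: rt_trans w2t ts.
by rewrite eu ev.
Qed.

Lemma is_sortE w u : is_sort w u -> u = ascent_sort w.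
Proof. by move/is_sort_uniq; apply; apply: is_sort_ascent_sort. Qed.

Lemma ascent_sort_id w : ascent_free w -> ascent_sort w = w.
Proof. by move=> afw; apply/esym/is_sortE; split=> //; apply: rt_refl. Qed.

Lemma ascent_sort_swapstep w u : swapstep w u -> ascent_sort w = ascent_sort u.
Proof.
move=> wu; apply/esym/is_sortE; have [us afs] := is_sort_ascent_sort u.
by split=> //; apply: rt_trans (rt_step _ _ _ _ wu) us.
Qed.

Lemma swapstep_iota (f g : nat -> L) n k : (k.+1 < n)%N -> f k < f k.+1 ->
  g k = f k.+1 -> g k.+1 = f k ->
  (forall j, (j < n)%N -> j != k -> j != k.+1 -> g j = f j) ->
  swapstep (map f (iota 0 n)) (map g (iota 0 n)).
Proof.
move=> kn fk gk gk1 gf.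
have -> : iota 0 n = iota 0 k ++ k :: k.+1 :: iota k.+2 (n - k.+2).
  have {1}-> : n = k + (n - k.+2).+2 by lia.
  by rewrite iotaD.
have eqA : map g (iota 0 k) = map f (iota 0 k).
  by apply/eq_in_map => j; rewrite mem_iota => jk; apply: gf; lia.
have eqB : map g (iota k.+2 (n - k.+2)) = map f (iota k.+2 (n - k.+2)).
  by apply/eq_in_map => j; rewrite mem_iota => jk; apply: gf; lia.
by rewrite !map_cat /= gk gk1 eqA eqB; apply: swapstep_at.
Qed.

End SortingWords.

Section SeqPrefix.
Context {A : eqType}.
Implicit Types (s t : seq A).

Lemma take_prefix s t k : prefix s t -> (k <= size s)%N -> take k t = take k s.
Proof. by move=> /prefixP [r ->] /takel_cat. Qed.

Lemma prefix_set_nth x0 s t k v : prefix s t -> (k < size s)%N ->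
  prefix (set_nth x0 s k v) (set_nth x0 t k v).
Proof.
move=> /prefixP [r ->]; elim: s k => [|a s IH] [|k] //= ks.
  by rewrite eqxx prefix_prefix.
by rewrite eqxx IH.
Qed.

Lemma last_set_nth x0 y0 s k v : (k.+1 < size s)%N ->
  last y0 (set_nth x0 s k v) = last y0 s.
Proof. by elim: s k y0 => [|a [|b s] IH] [|k] y0 //= ks; rewrite IH. Qed.

Lemma set_nth_rcons x0 s y k v : (k < size s)%N ->
  set_nth x0 (rcons s y) k v = rcons (set_nth x0 s k v) y.
Proof. by elim: s k => [|a s IH] [|k] //= ks; rewrite IH. Qed.

End SeqPrefix.

Section Chains.
Context {d : Order.disp_t} {T : finBPOrderType d}.
Implicit Types (b x y z : T) (c e m : seq T).

Lemma covb_lt x y : covb x y -> x < y.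
Proof. by case/andP. Qed.

Lemma path_covb_lt b c : path covb b c -> path <%O b c.
Proof. by apply: sub_path => ? ?; apply: covb_lt. Qed.

Lemma satch_rcons c y : satch (rcons c y) = satch c && covb (topc c) y.
Proof. exact: rcons_path. Qed.

Lemma maxch_satch m : maxch m -> satch m.
Proof. by case/andP. Qed.

Lemma satch_size c : satch c -> (size c < #|T|)%N.
Proof.
move=> sc; have uc : uniq (\bot :: c).
  by apply: (sorted_uniq lt_trans ltxx); apply: path_covb_lt.
by have := max_card (mem (\bot :: c)); rewrite (card_uniqP uc).
Qed.

Lemma exists_covb x y : x < y -> exists z, covb x z.
Proof.
move: (ltnSn #|[set z | x < z < y]|); move: {2}(_.+1) => n.
elim: n y => // n IH y yn xy.
have [noz|] := boolP [forall z, ~~ (x < z < y)]; first by exists y; rewrite /covb xy.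
rewrite negb_forall => /existsP [z]; rewrite negbK => /andP [xz zy].
apply: (IH z _ xz); rewrite -ltnS; apply: leq_ltn_trans yn.
apply: proper_card; apply/properP; split.
  by apply/subsetP => w; rewrite !inE => /andP [-> /lt_trans ->].
by exists z; rewrite !inE ?xz ?zy ?ltxx ?andbF.
Qed.

Lemma prefix_extend c : prefix c (extend c).
Proof.
rewrite /extend; elim: #|T| c => [|n IH] c /=; first exact: prefix_refl.
case: pickP => [y _|_]; last exact: prefix_refl.
exact: prefix_trans (prefix_rcons c y) (IH _).
Qed.

Lemma maxch_extend_fuel n c : satch c -> (#|T| <= size c + n)%N ->
  maxch (extend_fuel n c).
Proof.
elim: n c => [|n IH] c sc Tn /=; first by have := satch_size sc; lia.
case: pickP => [y cy | nocov].
  by apply: IH; [rewrite satch_rcons sc | rewrite size_rcons; lia].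
rewrite /maxch sc; apply/forallP => y; apply/negP => /exists_covb [z cz].
by have := nocov z; rewrite cz.
Qed.

Lemma maxch_extend c : satch c -> maxch (extend c).
Proof. by move=> sc; apply: maxch_extend_fuel; rewrite // leq_addl. Qed.

Lemma subset_prefix_path b c e : path covb b c -> path covb b e ->
  {subset c <= e} -> prefix c e.
Proof.
elim: c b e => [|x c IH] b e /=; first by rewrite prefix0s.
case/andP=> bx pc; case: e => [|y e] /=; first by move=> _ /(_ x (mem_head _ _)).
case/andP=> cby pe ce.
have xy : x = y.
  move: (ce x (mem_head _ _)); rewrite inE => /predU1P [//|xe].
  have /allP/(_ x xe) yx := order_path_min lt_trans (path_covb_lt pe).
  by move: bx => /andP [_ /forallP /(_ y)]; rewrite (covb_lt cby) yx.
subst y; rewrite eqxx /=; apply: (IH _ _ pc pe) => z zc.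
have /allP/(_ z zc) xz := order_path_min lt_trans (path_covb_lt pc).
by move: (ce z); rewrite inE zc orbT => /(_ isT); rewrite inE (gt_eqF xz).
Qed.

End Chains.

Section Labels.
Context {d : Order.disp_t} {T : finBPOrderType d}.
Context {dL : Order.disp_t} {L : porderType dL}.
Variable lam : seq T -> nat -> L.
Implicit Types (x y : T) (a b c e m : seq T).
Local Notation labs := (labs lam).

Lemma size_labs c : size (labs c) = size c.
Proof. by rewrite size_map size_iota. Qed.

Definition toR c : T * seq L := (topc c, ascent_sort (labs c)).

Lemma toR_onto p : isR lam p -> exists2 c, satch c & toR c = p.
Proof.
case: p => t w [c [sc [/= tc [afc /= lc]]]].
by exists c; rewrite // /toR ascent_sort_id // tc lc.
Qed.

Lemma simQ_refl c : satch c -> simQ lam c c.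
Proof. by move=> sc; do !split=> //; apply: rst_refl. Qed.

Lemma simQ_sym c1 c2 : simQ lam c1 c2 -> simQ lam c2 c1.
Proof. by case=> s1 [s2 [e h]]; do !split=> //; rewrite -e; apply: rst_sym. Qed.

Lemma simQ_trans c1 c2 c3 : simQ lam c1 c2 -> simQ lam c2 c3 -> simQ lam c1 c3.
Proof.
case=> s1 [_ [e12 h12]] [_ [s3 [e23 h23]]]; do !split=> //; first by rewrite e12.
by apply: rst_trans h12 _; rewrite e12.
Qed.

Lemma simQ_satch c1 c2 : simQ lam c1 c2 -> satch c1 /\ satch c2.
Proof. by case=> ? [? _]. Qed.

Lemma simQ_top c1 c2 : simQ lam c1 c2 -> topc c1 = topc c2.
Proof. by case=> _ [_ []]. Qed.

Section CLabeling.
Hypothesis HC : C_labeling lam.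

Lemma lam_prefix_eq c m1 m2 j : maxch m1 -> maxch m2 -> prefix c m1 -> prefix c m2 ->
  (j < size c)%N -> lam m1 j = lam m2 j.
Proof.
move=> mm1 mm2 cm1 cm2 jc.
apply: (HC mm1 mm2 (size_prefix cm1) (size_prefix cm2) _ jc).
by rewrite (take_prefix cm1) ?(take_prefix cm2).
Qed.

Lemma labs_maxch_prefix c m : maxch m -> prefix c m ->
  labs c = map (lam m) (iota 0 (size c)).
Proof.
move=> mm cm; have sc : satch c := prefix_path cm (maxch_satch mm).
apply/eq_in_map => j; rewrite mem_iota => /= jc.
exact: lam_prefix_eq (maxch_extend sc) mm (prefix_extend c) cm jc.
Qed.

Lemma cat_labs_drop c e : satch e -> prefix c e ->
  labs c ++ drop (size c) (labs e) = labs e.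
Proof.
move=> se ce; have me := maxch_extend se; have ee := prefix_extend e.
rewrite (labs_maxch_prefix me ee) (labs_maxch_prefix me (prefix_trans ce ee)).
by rewrite -{1}(minn_idPl (size_prefix ce)) -take_iota map_take cat_take_drop.
Qed.

Lemma qstepI c m i x : maxch m -> prefix c m -> ascent_at lam m i -> (i < size c)%N ->
  x != nth \bot m i.-1 -> switchP lam m i x -> qstep lam c (set_nth \bot c i.-1 x).
Proof.
move=> mm cm mi ic xn sw; exists m, i, x.
by do !split=> //; apply/esym/eqP; rewrite -prefixE.
Qed.

Lemma qstepP c c' : qstep lam c c' ->
  [/\ satch c, satch c', topc c' = topc c & swapstep (labs c) (labs c')].
Proof.
case=> m [i [x [mm [ec [/andP [/andP [i0 im] asc] [ic [_ [sw ->]]]]]]]].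
move: sw; rewrite /switchP; set m' := set_nth _ m _ x => -[mm' [l1 [l2 lo]]].
have ki : i.-1.+1 = i by rewrite prednK.
have cm : prefix c m by rewrite prefixE -ec.
have cm' : prefix (set_nth \bot c i.-1 x) m' by apply: prefix_set_nth; rewrite // ki ltnW.
have sz : size (set_nth \bot c i.-1 x) = size c.
  by rewrite size_set_nth ki; apply/maxn_idPr/ltnW.
split.
- exact: prefix_path cm (maxch_satch mm).
- exact: prefix_path cm' (maxch_satch mm').
- by rewrite /topc last_set_nth ?ki.
rewrite (labs_maxch_prefix mm cm) (labs_maxch_prefix mm' cm') sz.
apply: (swapstep_iota (k := i.-1)); rewrite ?ki //.
move=> j jc ji1 ji; apply: lo => //.
exact: leq_trans jc (size_prefix cm).
Qed.

Lemma simQ_ascent_sort c1 c2 : simQ lam c1 c2 ->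
  ascent_sort (labs c1) = ascent_sort (labs c2).
Proof.
case=> _ [_ [_]]; elim=> [a b [ab _] | a | a b _ IH | a b c _ IH1 _ IH2] //.
- by case: (qstepP ab) => _ _ _ /ascent_sort_swapstep.
- by rewrite IH1.
Qed.

Lemma toR_simQ c1 c2 : simQ lam c1 c2 -> toR c1 = toR c2.
Proof. by move=> h; rewrite /toR (simQ_top h) (simQ_ascent_sort h). Qed.

Section Switching.
Hypothesis HS : rank2_switching lam.

Lemma qstep_of_swapstep c u : satch c -> swapstep (labs c) u ->
  exists c', qstep lam c c'.
Proof.
move=> sc [a [b [x [y [xy [lc _]]]]]].
have mm := maxch_extend sc; have cm := prefix_extend c.
have ac : ((size a).+1 < size c)%N by rewrite -(size_labs c) lc size_cat /=; lia.
have lamE j : (j < size c)%N -> lam (extend c) j = nth x (labs c) j.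
  by move=> jc; rewrite (labs_maxch_prefix mm cm) (nth_map 0%N) ?nth_iota ?size_iota.
have asc : ascent_at lam (extend c) (size a).+1.
  apply/andP; split; first exact: leq_trans ac (size_prefix cm).
  rewrite !lamE ?(ltnW ac) // lc !nth_cat ltnn subnn ltnNge leqnSn /= subSnn.
  exact: xy.
have [[x' [[x'n sw] _]] _] := HS mm asc.
by exists (set_nth \bot c (size a) x'); apply: (qstepI mm cm asc ac x'n sw).
Qed.

Lemma qstep_rcons a b y : qstep lam a b -> covb (topc a) y ->
  qstep lam (rcons a y) (rcons b y).
Proof.
case=> m [i [x [mm [ea [asc [ia [xn [sw ->]]]]]]]] ay.
have ia' : (i < size a)%N := ia.
have am : prefix a m by rewrite prefixE -ea.
have say : satch (rcons a y).
  by rewrite satch_rcons ay andbT; apply: prefix_path am (maxch_satch mm).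
have mm2 := maxch_extend say; have aym2 := prefix_extend (rcons a y).
set m2 := extend (rcons a y) in mm2 aym2.
have am2 : prefix a m2 := prefix_trans (prefix_rcons a y) aym2.
have lamE j : (j < size a)%N -> lam m2 j = lam m j := lam_prefix_eq mm2 mm am2 am.
have [/andP [i0 _] lti] := andP asc.
have asc2 : ascent_at lam m2 i.
  apply/andP; split; first (apply/andP; split=> //).
    by apply: leq_trans (size_prefix aym2); rewrite size_rcons ltnW.
  by rewrite !lamE // (leq_ltn_trans (leq_pred i)).
have [[x2 [[x2n sw2] _]] _] := HS mm2 asc2.
have [_ uniq_x] := HS mm asc.
have ex2 : x = x2.
  by apply: uniq_x mm2 _ xn sw x2n sw2; rewrite (take_prefix am2 ia') (take_prefix am ia').
subst x2.
rewrite -set_nth_rcons; last exact: leq_ltn_trans (leq_pred i) ia'.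
by apply: qstepI mm2 aym2 asc2 _ x2n sw2; rewrite size_rcons ltnW.
Qed.

Lemma simQ_rcons c1 c2 y : simQ lam c1 c2 -> covb (topc c1) y ->
  simQ lam (rcons c1 y) (rcons c2 y).
Proof.
case=> s1 [s2 [e h]] cy; have topr c : topc (rcons c y) = y by rewrite /topc last_rcons.
split; first by rewrite satch_rcons s1 cy.
split; first by rewrite satch_rcons s2 -e cy.
split; first by rewrite !topr.
rewrite topr; elim: h => [a b [ab [ta tb]] | a | a b _ IH | a b c _ IH1 _ IH2].
- by apply: rst_step; split; [apply: qstep_rcons; rewrite ?ta | rewrite !topr].
- exact: rst_refl.
- exact: rst_sym.
- exact: rst_trans IH1 IH2.
Qed.

Lemma exists_ascent_free_simQ c : satch c ->
  exists2 c', simQ lam c c' & ascent_free (labs c').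
Proof.
elim: {c}(inversions (labs c)).+1 {-2}c (ltnSn (inversions (labs c))) => // n IH c cn sc.
have := swap_ascentP (labs c); case: swap_ascent => [u cu | afc]; last first.
  by exists c => //; apply: simQ_refl.
have [c' cc'] := qstep_of_swapstep sc cu.
have [_ sc' tc' lcc'] := qstepP cc'.
have [c'' c'c'' afc''] := IH c' (leq_trans (swapstep_inversions lcc') cn) sc'.
exists c'' => //; apply: simQ_trans c'c''.
by do !split=> //; apply: rst_step.
Qed.

Lemma simQ_sorted_rep c : satch c ->
  exists2 c', simQ lam c c' & labs c' = ascent_sort (labs c).
Proof.
move=> sc; have [c' cc' afc'] := exists_ascent_free_simQ sc.
by exists c' => //; rewrite (simQ_ascent_sort cc') ascent_sort_id.
Qed.

Lemma isR_toR c : satch c -> isR lam (toR c).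
Proof.
move=> sc; have [c' cc' lc'] := simQ_sorted_rep sc.
exists c'; split; first by case: (simQ_satch cc').
split; first by rewrite /= (simQ_top cc').
by rewrite lc'; split=> //; case: (is_sort_ascent_sort (labs c)).
Qed.

Lemma rcov_toR_rcons c y : satch (rcons c y) -> rcov lam (toR c) (toR (rcons c y)).
Proof.
rewrite satch_rcons => /andP [sc cy].
have [c' cc' lc'] := simQ_sorted_rep sc.
have [_ sc'] := simQ_satch cc'.
have c'y : covb (topc c') y by rewrite -(simQ_top cc').
have topr e : topc (rcons e y) = y by rewrite /topc last_rcons.
split; first exact: isR_toR.
split; first by apply: isR_toR; rewrite satch_rcons sc cy.
split; first by rewrite /= topr.
exists c'; split=> //; split; first by rewrite -(simQ_top cc').
split; first by rewrite lc'; case: (is_sort_ascent_sort (labs c)).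
split=> //=; rewrite topr -lc' cat_labs_drop ?prefix_rcons ?satch_rcons ?sc' //.
rewrite -(simQ_ascent_sort (simQ_rcons (simQ_sym cc') c'y)).
exact: is_sort_ascent_sort.
Qed.

Lemma rle_toR_cat c s : satch (c ++ s) -> rle lam (toR c) (toR (c ++ s)).
Proof.
elim/last_ind: s => [|s y IH]; first by rewrite cats0 => _; apply: rt_refl.
rewrite -rcons_cat => scsy; apply: rt_trans (IH _) (rt_step _ _ _ _ (rcov_toR_rcons scsy)).
by move: scsy; rewrite satch_rcons => /andP [].
Qed.

Lemma qle_rle c1 c2 : qle lam c1 c2 -> rle lam (toR c1) (toR c2).
Proof.
elim=> [a b [a0 [b0 [aa0 [bb0 [sa0 [sb0 sub]]]]]] | a | a b c _ IH1 _ IH2].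
- rewrite (toR_simQ aa0) (toR_simQ bb0).
  have /prefixP [s eb0] := subset_prefix_path sa0 sb0 sub.
  by rewrite eb0; apply: rle_toR_cat; rewrite -eb0.
- exact: rt_refl.
- exact: rt_trans IH1 IH2.
Qed.

Section DistinctWords.
Hypothesis HD : forall (r : seq T) (y : T) (d1 d2 : seq T), satch r ->
  intchain (topc r) y d1 -> intchain (topc r) y d2 ->
  ascent_free (rword lam r d1) -> ascent_free (rword lam r d2) ->
  d1 <> d2 -> rword lam r d1 <> rword lam r d2.

Lemma eq_ascent_free_labs c1 c2 : satch c1 -> satch c2 -> topc c1 = topc c2 ->
  ascent_free (labs c1) -> labs c1 = labs c2 -> c1 = c2.
Proof.
move=> s1 s2 t12 af1 l12; case: (eqVneq c1 c2) => // /eqP ne; exfalso.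
have rw e : rword lam [::] e = labs e by rewrite /rword drop0.
have ic e : satch e -> topc e = topc c1 -> intchain (topc [::]) (topc c1) e.
  by move=> se te; apply/andP; split=> //; apply/eqP.
apply: (HD (r := [::]) isT (ic _ s1 erefl) (ic _ s2 (esym t12)) _ _ ne).
all: by rewrite !rw -?l12.
Qed.

Lemma toR_eq c1 c2 : satch c1 -> satch c2 -> toR c1 = toR c2 <-> simQ lam c1 c2.
Proof.
move=> s1 s2; split=> [[t12 l12] | ]; last exact: toR_simQ.
have [c1' h1 e1] := simQ_sorted_rep s1; have [c2' h2 e2] := simQ_sorted_rep s2.
suff e12 : c1' = c2' by apply: simQ_trans h1 _; rewrite e12; apply: simQ_sym.
apply: eq_ascent_free_labs.
- by case: (simQ_satch h1).
- by case: (simQ_satch h2).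
- by rewrite -(simQ_top h1) -(simQ_top h2).
- by rewrite e1; case: (is_sort_ascent_sort (labs c1)).
- by rewrite e1 e2.
Qed.

Lemma rcov_qbase c1 c2 : satch c1 -> satch c2 ->
  rcov lam (toR c1) (toR c2) -> qbase lam c1 c2.
Proof.
move=> s1 s2 [_ [_ [/= cov [c [sc [/= tc [afc [/= lc srt]]]]]]]].
set e := rcons c (topc c2).
have se : satch e by rewrite satch_rcons sc tc.
rewrite -lc cat_labs_drop ?prefix_rcons // in srt.
exists c, e; split; first by apply/(toR_eq s1 sc); rewrite /toR tc (ascent_sort_id afc) lc.
split; first by apply/(toR_eq s2 se); rewrite /toR /e {2}/topc last_rcons (is_sortE srt).
by split=> //; split=> // z zc; rewrite mem_rcons inE zc orbT.
Qed.

Lemma rle_qle c1 c2 : satch c1 -> satch c2 -> rle lam (toR c1) (toR c2) -> qle lam c1 c2.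
Proof.
move=> s1 s2; move e1 : (toR c1) => p; move e2 : (toR c2) => q.
move=> /clos_rt_rt1n_iff h; elim: h c1 s1 e1 e2 => [p0 | p0 r q0 pr _ IH] c1 s1 e1 e2.
  apply: rt_step; exists c2, c2; split; first by apply/(toR_eq s1 s2); rewrite e1 e2.
  by split; [apply: simQ_refl | do !split].
have [_ [ir _]] := pr; have [cr sr er] := toR_onto ir.
apply: rt_trans (rt_step _ _ _ _ (rcov_qbase s1 sr _)) (IH cr sr er e2).
by rewrite e1 er.
Qed.

End DistinctWords.
End Switching.
End CLabeling.
End Labels.

Theorem theorem4p5 (d : Order.disp_t) (T : finBPOrderType d)
  (dL : Order.disp_t) (L : porderType dL) (lam : seq T -> nat -> L) :
  graded T -> CW_labeling lam -> Q_R_isomorphic lam.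
Proof.
move=> _ [[HC _] [HS HD]].
exists (toR lam); split; first exact: isR_toR.
split; first by move=> p /toR_onto [c]; exists c.
split; first exact: toR_eq.
by move=> c1 c2 s1 s2; split; [apply: qle_rle | apply: rle_qle].
Qed.
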